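(* For every route $R$ and every $b\in\mathbb{Z}^{V_+}_{\ge0}$, $$\operatorname{conv}\big(\Pi(R)\cap[\mathbf 0,b]^N\big)=\operatorname{conv}(\Pi(R))\cap[\mathbf 0,b]^N.$$
   Context: $G=(V,E)$ complete undirected graph with $V=\{0\}\cup V_+$ ($0$ depot, $V_+$ customers); $D=(V,A)$ replaces each edge by two opposite arcs. Capacity $C\in\mathbb{Q}_{>0}$; scenarios $\xi\in[N]$ with demand vectors $d^\xi\in\mathbb{Q}^{V_+}_{\ge0}$, $d^\xi(v)\le C$ for all $\xi,v$. A route $R=(v_1,\dots,v_\ell)$ is the cycle $0,v_1,\dots,v_\ell,0$ through distinct customers, $v_0=v_{\ell+1}=0$. Vectors $y\in\mathbb{R}^{[N]\times V_+}$ have entries $y^\xi_v$. For a route $R$ and $\xi$, $\mathcal{Y}^\xi(R)$ is the set of $y^\xi\in\mathbb{Z}^{V_+}_{\ge0}$ for which there exist $f\in\mathbb{R}^A_{\ge0}$, $g\in\mathbb{R}^{V_+}_{\ge0}$ with $f_{(v_{i-1},v_i)}+d^\xi(v_i)=f_{(v_i,v_{i+1})}+g_{v_i}$ ($i\in[\ell]$), $f_{(v_{i-1},v_i)}\le C$ ($i\in[\ell+1]$), $g_{v_i}\le Cy^\xi_{v_i}$ ($i\in[\ell]$). $\Pi(R)=\mathcal{Y}^1(R)\times\cdots\times\mathcal{Y}^N(R)$. $[\mathbf 0,b]^N=\{y:0\le y^\xi_v\le b_v\ \forall\xi,v\}$. *)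

From HB Require Import structures.
From mathcomp Require Import all_boot all_order all_algebra.
Set Implicit Arguments. Unset Strict Implicit. Unset Printing Implicit Defensive.
Import Order.TTheory GRing.Theory Num.Theory.
Local Open Scope ring_scope.

(* Customers V_+ = 'I_n ; vertices V = option 'I_n with None = depot 0.
   Scenarios [N] = 'I_N.  Vectors y in R^{[N] x V_+} are matrices 'M[R]_(N,n),
   entry y xi v = y^xi_v. *)
Definition vertex (n : nat) := option 'I_n.

Definition is_route (n : nat) (r : seq 'I_n) : Prop := uniq r /\ (0 < size r)%N.

(* v_i of the route, with v_0 = v_{l+1} = depot. *)
Definition rvtx (n : nat) (r : seq 'I_n) (i : nat) : vertex n :=
  if (1 <= i <= size r)%N then
    (if r is x0 :: _ then Some (nth x0 r i.-1) else None)
  else None.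

Definition Yxi (R : realFieldType) (n : nat) (C : R) (dxi : 'I_n -> R)
    (r : seq 'I_n) (y : 'I_n -> R) : Prop :=
  (forall v, exists k : nat, y v = k%:R) /\
  exists (f : vertex n -> vertex n -> R) (g : 'I_n -> R),
    (forall u w, u != w -> 0 <= f u w) /\
    (forall v, 0 <= g v) /\
    (forall i : nat, (1 <= i <= size r)%N ->
       forall v, rvtx r i = Some v ->
       f (rvtx r i.-1) (rvtx r i) + dxi v = f (rvtx r i) (rvtx r i.+1) + g v) /\
    (forall i : nat, (1 <= i <= (size r).+1)%N -> f (rvtx r i.-1) (rvtx r i) <= C) /\
    (forall i : nat, (1 <= i <= size r)%N ->
       forall v, rvtx r i = Some v -> g v <= C * y v).

Definition Pi (R : realFieldType) (N n : nat) (C : R) (d : 'I_N -> 'I_n -> R)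
    (r : seq 'I_n) (y : 'M[R]_(N, n)) : Prop :=
  forall xi : 'I_N, Yxi C (d xi) r (fun v => y xi v).

Definition box (R : realFieldType) (N n : nat) (b : 'I_n -> nat)
    (y : 'M[R]_(N, n)) : Prop :=
  forall (xi : 'I_N) (v : 'I_n), 0 <= y xi v /\ y xi v <= (b v)%:R.

Definition conv (R : realFieldType) (N n : nat) (S : 'M[R]_(N, n) -> Prop)
    (x : 'M[R]_(N, n)) : Prop :=
  exists (m : nat) (lam : 'I_m -> R) (p : 'I_m -> 'M[R]_(N, n)),
    (forall k, S (p k)) /\ (forall k, 0 <= lam k) /\
    \sum_(k < m) lam k = 1 /\ x = \sum_(k < m) lam k *: p k.

From HB Require Import structures.
From mathcomp Require Import all_boot all_order all_algebra.
From mathcomp Require Import lra zify.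
Set Implicit Arguments. Unset Strict Implicit. Unset Printing Implicit Defensive.
Import Order.TTheory GRing.Theory Num.Theory.
Local Open Scope ring_scope.

(* For an integral [y^xi], membership in [Y^xi(R)] amounts to load feasibility along
   the route: every segment [v_(i+1) .. v_j] has total demand at most
   [C * (1 + sum of y)].  For integral [y] this is equivalent to the rounded capacity
   inequalities  sum_(segment) y >= M + 1  whenever the segment demand exceeds
   [(M + 1) C]; these are linear, hence hold on [conv Pi(R)].  A point [y] of
   [conv Pi(R)] inside the box is then rounded with a common shift [t] in [0, 1):
   with prefix sums [P_s] along the route, [v_(s+1)] receives
   [floor (P_(s+1) + t) - floor (P_s + t)].  Segment sums of the rounded vector are
   differences of floors, so it satisfies the same inequalities and stays in the
   box, and since the average of [floor (x + t)] over [t] is [x], averaging over [t]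
   returns [y].  Only finitely many values of [t] give different roundings, so the
   average is a finite convex combination. *)

Section BoundedFloor.
Variable R : realFieldType.

(* [R] need not be archimedean, so the floor is only computed below the bound [m.+1]. *)
Fixpoint bfloor (m : nat) (x : R) : nat :=
  if m is m'.+1 then (if m%:R <= x then m else bfloor m' x) else 0%N.

Variable B : nat.

Lemma bfloorP (x : R) :
  0 <= x -> x < B.+1%:R -> (bfloor B x)%:R <= x /\ x < (bfloor B x).+1%:R.
Proof.
elim: B x => [|m IH] x x0 xB /=; first by rewrite x0.
case: ifP => lex; first by rewrite lex.
by apply: IH; rewrite // ltNge lex.
Qed.

Lemma bfloor_unique (m : nat) (x : R) :
  0 <= x -> x < B.+1%:R -> m%:R <= x < m.+1%:R -> bfloor B x = m.
Proof.
move=> x0 xB /andP[mx xm]; have [fx xf] := bfloorP x0 xB.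
have : (bfloor B x < m.+1)%N by rewrite -(ltr_nat R); apply: le_lt_trans xm.
have : (m < (bfloor B x).+1)%N by rewrite -(ltr_nat R); apply: le_lt_trans xf.
lia.
Qed.

Lemma bfloor_addn_le (k : nat) (x x' : R) :
  0 <= x -> x' < B.+1%:R -> x + k%:R <= x' -> (bfloor B x + k <= bfloor B x')%N.
Proof.
move=> x0 x'B le_xx'.
have k0 : 0 <= k%:R :> R by [].
have [fx xf] := bfloorP x0 (ltac:(lra) : x < B.+1%:R).
have [fx' x'f] := bfloorP (ltac:(lra) : 0 <= x') x'B.
have : (bfloor B x + k)%:R < (bfloor B x').+1%:R :> R by rewrite natrD; lra.
by rewrite ltr_nat ltnS.
Qed.

Lemma bfloor_le_addn (k : nat) (x x' : R) :
  0 <= x -> x <= x' -> x' < B.+1%:R -> x' <= x + k%:R -> (bfloor B x' <= bfloor B x + k)%N.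
Proof.
move=> x0 xx' x'B le_x'x.
have [fx xf] := bfloorP x0 (ltac:(lra) : x < B.+1%:R).
have [fx' x'f] := bfloorP (ltac:(lra) : 0 <= x') x'B.
have : (bfloor B x')%:R < (bfloor B x + k).+1%:R :> R by rewrite -addSn natrD; lra.
by rewrite ltr_nat ltnS.
Qed.

Lemma bfloor_le (x x' : R) :
  0 <= x -> x <= x' -> x' < B.+1%:R -> (bfloor B x <= bfloor B x')%N.
Proof. by move=> x0 xx' x'B; rewrite -[bfloor B x]addn0 bfloor_addn_le ?addr0. Qed.

Definition jump (x : R) : R := (bfloor B x)%:R + 1 - x.

Lemma jump_itv (x : R) : 0 <= x -> x <= B%:R -> 0 < jump x <= 1.
Proof.
move=> x0 xB; have [fx xf] := bfloorP x0 (ltac:(rewrite -natr1; lra) : x < B.+1%:R).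
by rewrite /jump; move: xf; rewrite -natr1 => xf; apply/andP; split; lra.
Qed.

Lemma bfloor_shift (x t : R) :
  0 <= x -> x <= B%:R -> 0 <= t < 1 ->
  bfloor B (x + t) = (bfloor B x + (jump x <= t)%R)%N.
Proof.
move=> x0 xB /andP[t0 t1].
have [fx xf] := bfloorP x0 (ltac:(rewrite -natr1; lra) : x < B.+1%:R).
case: (leP (jump x) t); rewrite /jump => h;
  apply: bfloor_unique; rewrite ?natrD -?natr1 //=; try lra; apply/andP; split; lra.
Qed.

End BoundedFloor.

Section StepWeights.
Variables (R : realFieldType) (T : seq R).

(* The least element of [T] above [t], or [1] if there is none. *)
Definition next_point (t : R) : R :=
  foldr (fun a nxt => if (t < a) && (a < nxt) then a else nxt) 1 T.

Definition step_weight (t : R) : R := next_point t - t.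

Lemma next_point_mem t : next_point t \in 1 :: T.
Proof.
rewrite /next_point; elim: T => [|a T' IH] /=; first exact: mem_head.
case: ifP => _; first by rewrite !inE eqxx orbT.
by move: IH; rewrite !inE => /orP[->|->]; rewrite ?orbT.
Qed.

Lemma next_point_gt t : t < 1 -> t < next_point t.
Proof. by move=> t1; rewrite /next_point; elim: T => [|a T' IH] //=; case: ifP => // /andP[]. Qed.

Lemma next_point_min t a : a \in T -> t < a -> next_point t <= a.
Proof.
rewrite /next_point; elim: T => [|b T' IH] //= aT ta.
move: aT; rewrite inE => /orP[/eqP <-|aT].
  by case: ifP => // /negbT; rewrite negb_and ta /= -leNgt.
case: ifP => [/andP[_ h]|_]; last exact: IH.
exact: ltW (lt_le_trans h (IH aT ta)).
Qed.

Hypotheses (T_uniq : uniq T) (T01 : forall t, t \in T -> 0 <= t < 1).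

Lemma step_weight_ge0 t : t \in T -> 0 <= step_weight t.
Proof. by move=> /T01 /andP[_ t1]; rewrite subr_ge0 ltW // next_point_gt. Qed.

(* The weights above [a] telescope along the points of [T]. *)
Lemma sum_step_weight_ge a :
  a \in 1 :: T -> \sum_(t <- T | a <= t) step_weight t = 1 - a.
Proof.
have T1 t : t \in T -> t < 1 by move=> /T01 /andP[].
have sum_ge1 : \sum_(t <- T | 1 <= t) step_weight t = 0.
  by rewrite big_seq_cond big1 // => t /andP[/T1]; rewrite ltNge => /negbTE->.
have [k] := ubnP (size [seq t <- T | a <= t]); elim: k a => [|k IH] a //= hk.
rewrite inE => /orP[/eqP->|aT]; first by rewrite sum_ge1 subrr.
have split_a : perm_eq [seq t <- T | a <= t] (a :: [seq t <- T | next_point a <= t]).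
  apply: uniq_perm => [|/=|x]; first exact: filter_uniq.
    by rewrite filter_uniq // andbT mem_filter negb_and -ltNge next_point_gt ?T1.
  rewrite inE !mem_filter.
  have [->|xa] /= := eqVneq x a; first by rewrite lexx aT.
  case xT: (x \in T); rewrite ?andbF // !andbT.
  apply/idP/idP => [ax|].
    by apply: next_point_min; rewrite // lt_def xa.
  by move/(lt_le_trans (next_point_gt (T1 a aT)))/ltW.
rewrite -big_filter (perm_big _ split_a) big_cons big_filter IH.
- by rewrite /step_weight /=; lra.
- by move: hk; rewrite (perm_size split_a).
- exact: next_point_mem.
Qed.

Hypothesis T0 : 0 \in T.

Lemma sum_step_weight : \sum_(t <- T) step_weight t = 1.
Proof.
rewrite -[1]subr0 -sum_step_weight_ge ?inE ?T0 ?orbT // big_seq_cond [RHS]big_seq_cond.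
by apply: eq_bigl => t; case tT: (t \in T); rewrite //= (andP (T01 tT)).1.
Qed.

Lemma sum_step_weight_bfloor (B : nat) (x : R) :
  0 <= x -> x <= B%:R -> jump B x \in 1 :: T ->
  \sum_(t <- T) step_weight t * (bfloor B (x + t))%:R = x.
Proof.
move=> x0 xB jT.
rewrite big_seq (eq_bigr (fun t => step_weight t * (bfloor B x)%:R +
                                    step_weight t * (jump B x <= t)%R%:R)); last first.
  by move=> t tT; rewrite bfloor_shift ?T01 // natrD mulrDr.
rewrite -big_seq big_split /= -mulr_suml sum_step_weight mul1r.
rewrite (eq_bigr (fun t => if jump B x <= t then step_weight t else 0)); last first.
  by move=> t _; case: ifP; rewrite ?mulr1 ?mulr0.
by rewrite -big_mkcond sum_step_weight_ge // /jump; lra.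
Qed.

End StepWeights.

Section Lindley.
Variables (R : realFieldType) (e : nat -> R).

Fixpoint lindley (t : nat) : R :=
  if t is t'.+1 then Num.max 0 (lindley t' + e t') else 0.

Lemma lindley_ge0 t : 0 <= lindley t.
Proof. by case: t => //= t; rewrite le_max lexx. Qed.

Lemma lindley_ge t : lindley t + e t <= lindley t.+1.
Proof. by rewrite /= le_max lexx orbT. Qed.

Lemma lindley_sum t : exists2 i, (i <= t)%N & lindley t = \sum_(i <= s < t) e s.
Proof.
elim: t => [|t [i it IH]] /=; first by exists 0%N; rewrite ?big_geq.
have [le0|gt0] := leP (lindley t + e t) 0.
  by exists t.+1; rewrite ?big_geq.
by exists i; rewrite ?(leqW it) // big_nat_recr //= IH.
Qed.

End Lindley.

Definition nat_valued (R : realFieldType) (I : Type) (z : I -> R) :=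
  forall v, exists k : nat, z v = k%:R.

Section Route.
Variables (R : realFieldType) (n : nat) (x0 : 'I_n) (r : seq 'I_n).
Hypotheses (r_uniq : uniq r) (r_gt0 : (0 < size r)%N).

Lemma rvtxE i : rvtx r i = if (1 <= i <= size r)%N then Some (nth x0 r i.-1) else None.
Proof.
rewrite /rvtx; case: ifP => // /andP[i1 il].
case Er: r il => [|y r'] /= il; first by case: i i1 il.
by rewrite (set_nth_default y) //; case: i i1 il.
Qed.

Lemma rvtx_neq i : (i <= size r)%N -> rvtx r i != rvtx r i.+1.
Proof.
move=> il; rewrite !rvtxE /=; case: i il => [|i] il /=; first by rewrite r_gt0.
rewrite il; case: ltnP => // lt_i.
by rewrite (inj_eq Some_inj) nth_uniq // ?neq_ltn ?ltnSn // ltnW.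
Qed.

Definition seg_sum (z : 'I_n -> R) (i j : nat) : R := \sum_(i <= s < j) z (nth x0 r s).

Definition load_feasible (c : R) (dd z : 'I_n -> R) : Prop :=
  forall i j, (i <= j <= size r)%N -> seg_sum dd i j <= c + c * seg_sum z i j.

Definition capacity_ineqs (c : R) (dd z : 'I_n -> R) : Prop :=
  forall i j (M : nat), (i <= j <= size r)%N ->
    M.+1%:R * c < seg_sum dd i j -> M.+1%:R <= seg_sum z i j.

Lemma seg_sum_nat (z : 'I_n -> R) i j : nat_valued z -> exists k : nat, seg_sum z i j = k%:R.
Proof.
move=> zN; apply: (big_ind (fun x => exists k : nat, x = k%:R)) => [|_ _ [k ->] [l ->]|s _].
- by exists 0%N.
- by exists (k + l)%N; rewrite natrD.
- exact: zN.
Qed.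

(* Summing the flow balances over a segment, its demand is the flow leaving [v_j]
   (at most [C]) minus the flow entering [v_(i+1)] (nonnegative) plus the amounts
   unloaded (at most [C * z v] each). *)
Lemma Yxi_load_feasible c dd z : Yxi c dd r z -> load_feasible c dd z.
Proof.
move=> [_ [f [g [f_ge0 [_ [balance [f_leC g_le]]]]]]] i j /andP[ij jl].
pose phi t := f (rvtx r t) (rvtx r t.+1).
have balance_s s : (s < size r)%N -> dd (nth x0 r s) = phi s.+1 - phi s + g (nth x0 r s).
  move=> sl; have := balance s.+1 _ (nth x0 r s); rewrite /phi /= rvtxE /= sl => /(_ isT erefl).
  lra.
have -> : seg_sum dd i j = phi j - phi i + seg_sum g i j.
  rewrite -telescope_sumr // /seg_sum -big_split /= !big_nat; apply: eq_bigr => s /andP[_ sj].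
  exact/balance_s/(leq_trans sj jl).
have g_seg : seg_sum g i j <= c * seg_sum z i j.
  rewrite /seg_sum mulr_sumr !big_nat; apply: ler_sum => s /andP[_ sj].
  have sl := leq_trans sj jl.
  by apply: (g_le s.+1); rewrite ?rvtxE /= ?sl.
have phi_i : 0 <= phi i by apply/f_ge0/rvtx_neq/(leq_trans ij jl).
have phi_j : phi j <= c by apply: (f_leC j.+1); rewrite /= ltnS jl.
lra.
Qed.

(* The flow on the arc leaving [v_t] is the Lindley recursion of the excess demand
   [d - C z]; it stays below [C] by load feasibility. *)
Lemma load_feasible_Yxi c dd z :
  0 < c -> (forall v, 0 <= dd v) -> nat_valued z -> load_feasible c dd z -> Yxi c dd r z.
Proof.
move=> c_gt0 dd_ge0 zN feas; split => //.
have z_ge0 v : 0 <= z v by case: (zN v) => k ->.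
pose e s := dd (nth x0 r s) - c * z (nth x0 r s).
pose L := lindley e.
have L_leC t : (t <= size r)%N -> L t <= c.
  move=> tl; rewrite /L; have [i it ->] := lindley_sum e t.
  have := feas i t; rewrite it tl => /(_ isT); rewrite /seg_sum /e sumrB -mulr_sumr; lra.
have L_le t : L t.+1 <= L t + dd (nth x0 r t).
  rewrite /L /= ge_max addr_ge0 ?lindley_ge0 //= /e lerD2l gerDl oppr_le0.
  by rewrite mulr_ge0 // ltW.
pose f (u w : vertex n) := if w is Some v then L (index v r) else L (size r).
pose g v := if v \in r then L (index v r) + dd v - L (index v r).+1 else 0.
have fE u i : (i <= size r)%N -> f u (rvtx r i.+1) = L i.
  by move=> il; rewrite rvtxE /=; case: ltngtP il => // [il|->] _; rewrite /f ?index_uniq.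
have gE i : (i < size r)%N -> g (nth x0 r i) = L i + dd (nth x0 r i) - L i.+1.
  by move=> il; rewrite /g mem_nth // index_uniq.
have rvtxS i v : (1 <= i <= size r)%N -> rvtx r i = Some v -> v = nth x0 r i.-1.
  by move=> hi; rewrite rvtxE hi => -[<-].
exists f, g; split; [|split; [|split; [|split]]].
- by move=> u [v|] _; apply: lindley_ge0.
- move=> v; rewrite /g; case: ifP => // vr.
  by have := L_le (index v r); rewrite nth_index //; lra.
- move=> [//|i] hi v /(rvtxS _ _ hi) -> /=; move: hi => /andP[_ il].
  by rewrite fE 1?ltnW // fE // gE //; lra.
- by move=> [//|i] /andP[_ hi]; rewrite fE // L_leC.
- move=> [//|i] hi v /(rvtxS _ _ hi) ->; rewrite /= gE; last lia.
  by have := lindley_ge e i; rewrite -/L /e; lra.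
Qed.

Lemma load_feasible_capacity c dd z :
  0 < c -> nat_valued z -> load_feasible c dd z -> capacity_ineqs c dd z.
Proof.
move=> c_gt0 zN feas i j M ijl dd_gt; have [k zk] := seg_sum_nat i j zN.
have := feas i j ijl; rewrite zk => dd_le.
have : M.+1%:R * c < k.+1%:R * c by rewrite -natr1 mulrDl mul1r addrC; lra.
by rewrite ltr_pM2r // ltr_nat ltnS -(ler_nat R).
Qed.

Lemma capacity_load_feasible c dd z :
  nat_valued z -> capacity_ineqs c dd z -> load_feasible c dd z.
Proof.
move=> zN cap i j ijl; have [k zk] := seg_sum_nat i j zN.
rewrite zk leNgt; apply/negP => dd_gt.
suff /(cap i j k ijl) : k.+1%:R * c < seg_sum dd i j by rewrite zk ler_nat ltnn.
by rewrite -natr1; lra.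
Qed.

Lemma Yxi_capacity c dd z : 0 < c -> (forall v, 0 <= dd v) ->
  Yxi c dd r z <-> nat_valued z /\ capacity_ineqs c dd z.
Proof.
move=> c_gt0 dd_ge0; split=> [Y|[zN cap]].
  by split; [exact: Y.1 | exact/load_feasible_capacity/Yxi_load_feasible/Y/Y.1].
exact/load_feasible_Yxi/capacity_load_feasible.
Qed.

Lemma eq_capacity_ineqs c dd z z' :
  z =1 z' -> capacity_ineqs c dd z -> capacity_ineqs c dd z'.
Proof.
by move=> zz' cap i j M ijl; rewrite /seg_sum -(eq_bigr _ (fun s _ => zz' _)); apply: cap.
Qed.

Lemma capacity_ineqs_conv (m : nat) c dd (lam : 'I_m -> R) (p : 'I_m -> 'I_n -> R) z :
  (forall k, capacity_ineqs c dd (p k)) -> (forall k, 0 <= lam k) -> \sum_k lam k = 1 ->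
  (forall v, z v = \sum_k lam k * p k v) -> capacity_ineqs c dd z.
Proof.
move=> cap lam_ge0 lam_sum zE i j M ijl dd_gt.
have -> : seg_sum z i j = \sum_k lam k * seg_sum (p k) i j.
  rewrite /seg_sum (eq_bigr _ (fun s _ => zE _)) exchange_big /=.
  by apply: eq_bigr => k _; rewrite mulr_sumr.
have -> : M.+1%:R = \sum_k lam k * M.+1%:R :> R by rewrite -mulr_suml lam_sum mul1r.
by apply: ler_sum => k _; apply: ler_wpM2l => //; apply: (cap k i j M).
Qed.

End Route.

Section Rounding.
Variables (R : realFieldType) (n : nat) (x0 : 'I_n) (r : seq 'I_n) (B : nat) (y : 'I_n -> R).
Hypotheses (r_uniq : uniq r) (y_ge0 : forall v, 0 <= y v) (y_leB : forall v, y v <= B%:R).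
Hypothesis prefix_leB : forall t, (t <= size r)%N -> seg_sum x0 r y 0 t <= B%:R.

Local Notation P := (seg_sum x0 r y 0).

Lemma prefix_ge0 t : 0 <= P t.
Proof. exact: sumr_ge0. Qed.

Lemma prefix_sub i j : (i <= j)%N -> P j - P i = seg_sum x0 r y i j.
Proof. by move=> ij; rewrite /seg_sum (big_cat_nat (leq0n i) ij) /= addrAC subrr add0r. Qed.

Lemma prefix_le i j : (i <= j)%N -> P i <= P j.
Proof. by move=> ij; rewrite -subr_ge0 prefix_sub //; apply: sumr_ge0. Qed.

Lemma prefixS t : P t.+1 = P t + y (nth x0 r t).
Proof. by rewrite /seg_sum big_nat_recr. Qed.

(* Off the route a customer is rounded on its own, on the route at its prefix sum. *)
Definition offset (v : 'I_n) : R := if v \in r then P (index v r) else 0.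

Definition round (t : R) (v : 'I_n) : nat :=
  (bfloor B (offset v + y v + t) - bfloor B (offset v + t))%N.

Lemma offset_nth s : (s < size r)%N -> offset (nth x0 r s) = P s.
Proof. by move=> sl; rewrite /offset mem_nth // index_uniq. Qed.

Lemma offset_bounds v : 0 <= offset v /\ offset v + y v <= B%:R.
Proof.
rewrite /offset; case: ifP => vr; last by rewrite add0r.
by rewrite prefix_ge0 -{2}(nth_index x0 vr) -prefixS prefix_leB // index_mem.
Qed.

Section Shift.
Variable t : R.
Hypothesis t01 : 0 <= t < 1.

Lemma round_le (b : nat) v : y v <= b%:R -> (round t v <= b)%N.
Proof.
move=> yb; rewrite /round leq_subLR; have [o0 oyB] := offset_bounds v.
case/andP: t01 => t0 t1; have y0 := y_ge0 v.
by apply: bfloor_le_addn; rewrite -?natr1; lra.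
Qed.

Lemma round_natr v :
  (round t v)%:R = (bfloor B (offset v + y v + t))%:R - (bfloor B (offset v + t))%:R :> R.
Proof.
have [o0 oyB] := offset_bounds v; case/andP: t01 => t0 t1; have y0 := y_ge0 v.
by rewrite natrB // bfloor_le // -?natr1; lra.
Qed.

Lemma seg_sum_round i j : (i <= j <= size r)%N ->
  seg_sum x0 r (fun v => (round t v)%:R : R) i j =
  (bfloor B (P j + t))%:R - (bfloor B (P i + t))%:R.
Proof.
move=> /andP[ij jl]; rewrite -(telescope_sumr (fun s => (bfloor B (P s + t))%:R)) //.
rewrite /seg_sum !big_nat; apply: eq_bigr => s /andP[_ sj]; have sl := leq_trans sj jl.
by rewrite round_natr offset_nth // -prefixS.
Qed.

Lemma round_capacity c dd : capacity_ineqs x0 r c dd y ->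
  capacity_ineqs x0 r c dd (fun v => (round t v)%:R : R).
Proof.
move=> cap i j M ijl dd_gt; have /andP[ij jl] := ijl.
have := cap i j M ijl dd_gt; rewrite -prefix_sub // seg_sum_round // => yM.
case/andP: t01 => t0 t1; have Pj := prefix_leB jl; have Pi0 := prefix_ge0 i.
have Pij := prefix_le ij.
have le_ij : (bfloor B (P i + t) <= bfloor B (P j + t))%N.
  by apply: bfloor_le; rewrite -?natr1; lra.
rewrite -natrB // ler_nat leq_subRL //.
by apply: bfloor_addn_le; rewrite -?natr1 in yM *; lra.
Qed.

End Shift.

Lemma sum_step_weight_round (T : seq R) v :
  uniq T -> (forall t, t \in T -> 0 <= t < 1) -> 0 \in T ->
  jump B (offset v) \in 1 :: T -> jump B (offset v + y v) \in 1 :: T ->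
  \sum_(t <- T) step_weight T t * (round t v)%:R = y v.
Proof.
move=> T_uniq T01 T0 jo joy; have [o0 oyB] := offset_bounds v; have y0 := y_ge0 v.
rewrite big_seq (eq_bigr (fun t => step_weight T t * (bfloor B (offset v + y v + t))%:R -
                                    step_weight T t * (bfloor B (offset v + t))%:R)).
  by rewrite -big_seq sumrB !sum_step_weight_bfloor //; lra.
by move=> t tT; rewrite round_natr ?T01 // mulrBr.
Qed.

End Rounding.

Lemma jump_thresholds (R : realFieldType) (I : finType) (B : nat) (x : I -> R) :
  (forall i, 0 <= x i) -> (forall i, x i <= B%:R) ->
  exists T : seq R, [/\ uniq T, 0 \in T, forall t, t \in T -> 0 <= t < 1 &
                        forall i, jump B (x i) \in 1 :: T].
Proof.
move=> x_ge0 x_leB.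
exists (undup (0 :: [seq jump B (x i) | i <- enum I & jump B (x i) < 1])).
split=> [|||i]; rewrite ?undup_uniq ?mem_undup ?mem_head //.
  move=> t; rewrite mem_undup inE => /orP[/eqP->|/mapP[i]]; first by rewrite lexx ltr01.
  rewrite mem_filter => /andP[lt1 _] ->; have /andP[j0 _] := jump_itv (x_ge0 i) (x_leB i).
  by rewrite ltW.
have /andP[_] := jump_itv (x_ge0 i) (x_leB i); rewrite le_eqVlt => /orP[/eqP->|lt1].
  exact: mem_head.
by rewrite !inE mem_undup inE (map_f (fun i => jump B (x i))) ?orbT // mem_filter lt1 mem_enum.
Qed.

Section ConvexHull.
Variables (R : realFieldType) (N n : nat).
Implicit Types (S : 'M[R]_(N, n) -> Prop) (x : 'M[R]_(N, n)).

Lemma conv_mono S S' x : (forall z, S z -> S' z) -> conv S x -> conv S' x.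
Proof. by move=> SS' [m [lam [p [Sp rest]]]]; exists m, lam, p; split=> // k; apply/SS'/Sp. Qed.

Lemma box_conv S (b : 'I_n -> nat) x : (forall z, S z -> box b z) -> conv S x -> box b x.
Proof.
move=> Sbox [m [lam [p [Sp [lam_ge0 [lam_sum ->]]]]]] xi v; rewrite summxE.
have Ep k : (lam k *: p k) xi v = lam k * p k xi v by rewrite mxE.
split; rewrite (eq_bigr _ (fun k _ => Ep k)).
  by apply: sumr_ge0 => k _; rewrite mulr_ge0 // (Sbox _ (Sp k) xi v).1.
have -> : (b v)%:R = \sum_k lam k * (b v)%:R :> R by rewrite -mulr_suml lam_sum mul1r.
by apply: ler_sum => k _; apply: ler_wpM2l => //; case: (Sbox _ (Sp k) xi v).
Qed.

Lemma conv_seq (A : eqType) S x (s : seq A) (w : A -> R) (p : A -> 'M[R]_(N, n)) :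
  (forall a, a \in s -> S (p a)) -> (forall a, a \in s -> 0 <= w a) ->
  \sum_(a <- s) w a = 1 -> x = \sum_(a <- s) w a *: p a -> conv S x.
Proof.
case: s => [|a0 s] Sp w_ge0; first by rewrite big_nil => /eqP; rewrite eq_sym oner_eq0.
move=> w_sum ->; set s' := a0 :: s in Sp w_ge0 w_sum *.
exists (size s'), (fun k => w (nth a0 s' k)), (fun k => p (nth a0 s' k)).
have mem (k : 'I_(size s')) : nth a0 s' k \in s' by rewrite mem_nth.
rewrite (big_nth a0) big_mkord in w_sum.
by rewrite (big_nth a0) big_mkord; split=> [k|]; [apply: Sp | split=> // k; apply: w_ge0].
Qed.

End ConvexHull.

Section BoxBound.
Variables (R : realFieldType) (n : nat) (x0 : 'I_n) (r : seq 'I_n) (b : 'I_n -> nat).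

Definition route_bound : nat := (\sum_(s < size r) b (nth x0 r s) + \sum_v b v)%N.

Variable z : 'I_n -> R.
Hypothesis z_box : forall v, 0 <= z v <= (b v)%:R.

Lemma le_route_bound v : z v <= route_bound%:R.
Proof.
apply: le_trans (proj2 (andP (z_box v))) _; rewrite ler_nat /route_bound (bigD1 v) //=.
by rewrite addnCA leq_addr.
Qed.

Lemma prefix_le_route_bound t : (t <= size r)%N -> seg_sum x0 r z 0 t <= route_bound%:R.
Proof.
move=> tl; apply: (@le_trans _ _ (\sum_(0 <= s < t) (b (nth x0 r s))%:R)).
  by apply: ler_sum => s _; case/andP: (z_box (nth x0 r s)).
rewrite -natr_sum ler_nat /route_bound -(big_mkord xpredT (fun s => b (nth x0 r s))).
by rewrite (big_cat_nat (leq0n t) tl) /= -addnA leq_addr.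
Qed.

End BoxBound.


Section Main.
Variables (R : realFieldType) (N n : nat) (c : R) (dd : 'I_N -> 'I_n -> R).
Variables (r : seq 'I_n) (x0 : 'I_n) (b : 'I_n -> nat) (y : 'M[R]_(N, n)).
Hypotheses (c_gt0 : 0 < c) (dd_ge0 : forall xi v, 0 <= dd xi v).
Hypotheses (r_uniq : uniq r) (r_gt0 : (0 < size r)%N) (y_box : box b y).

Local Notation B := (route_bound x0 r b).

Let y_row xi v : 0 <= y xi v <= (b v)%:R.
Proof. by apply/andP; apply: y_box. Qed.

Let y_ge0 xi v : 0 <= y xi v.
Proof. by case: (y_box xi v). Qed.

Let y_leB xi v : y xi v <= B%:R.
Proof. exact: le_route_bound (y_row xi) v. Qed.

Let prefix_leB xi t : (t <= size r)%N -> seg_sum x0 r (y xi) 0 t <= B%:R.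
Proof. exact: prefix_le_route_bound (y_row xi) t. Qed.

Lemma conv_Pi_capacity : conv (Pi c dd r) y -> forall xi, capacity_ineqs x0 r c (dd xi) (y xi).
Proof.
move=> [m [lam [p [Pi_p [lam_ge0 [lam_sum y_def]]]]]] xi.
apply: (capacity_ineqs_conv (p := fun k => p k xi)) lam_ge0 lam_sum _ => [k|v].
  by case/(Yxi_capacity x0 r_uniq r_gt0 _ c_gt0 (dd_ge0 xi)): (Pi_p k xi).
by rewrite y_def summxE; apply: eq_bigr => k _; rewrite mxE.
Qed.

Definition round_mx (t : R) : 'M[R]_(N, n) :=
  \matrix_(xi, v) (round x0 r B (y xi) t v)%:R.

Lemma round_mx_Pi_box t : 0 <= t < 1 -> (forall xi, capacity_ineqs x0 r c (dd xi) (y xi)) ->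
  Pi c dd r (round_mx t) /\ box b (round_mx t).
Proof.
move=> t01 cap; split=> [xi|xi v].
  apply/(Yxi_capacity x0 r_uniq r_gt0 _ c_gt0 (dd_ge0 xi)); split=> [v|].
    by rewrite mxE; eexists.
  have := round_capacity r_uniq (y_ge0 xi) (y_leB xi) (prefix_leB xi) t01 (cap xi).
  by apply: eq_capacity_ineqs => v; rewrite mxE.
rewrite mxE ler0n ler_nat (round_le (y_ge0 xi) (y_leB xi) (prefix_leB xi) t01) //.
by case/andP: (y_row xi v).
Qed.

Lemma sum_round_mx (T : seq R) :
  uniq T -> (forall t, t \in T -> 0 <= t < 1) -> 0 \in T ->
  (forall xi v, jump B (offset x0 r (y xi) v) \in 1 :: T) ->
  (forall xi v, jump B (offset x0 r (y xi) v + y xi v) \in 1 :: T) ->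
  \sum_(t <- T) step_weight T t *: round_mx t = y.
Proof.
move=> T_uniq T01 T0 jump_o jump_oy; apply/matrixP => xi v; rewrite summxE.
rewrite (eq_bigr (fun t => step_weight T t * (round x0 r B (y xi) t v)%:R)).
  by rewrite (sum_step_weight_round (y_ge0 xi) (y_leB xi) (prefix_leB xi)).
by move=> t _; rewrite !mxE.
Qed.

Lemma conv_Pi_box : conv (Pi c dd r) y -> conv (fun z => Pi c dd r z /\ box b z) y.
Proof.
move=> /conv_Pi_capacity cap.
pose jumps (a : 'I_N * 'I_n * bool) :=
  offset x0 r (y a.1.1) a.1.2 + (if a.2 then y a.1.1 a.1.2 else 0).
have jumps_bounds a : 0 <= jumps a /\ jumps a <= B%:R.
  case: a => [[xi v] e]; have [o0 oy] := offset_bounds (y_ge0 xi) (y_leB xi) (prefix_leB xi) v.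
  by have := y_ge0 xi v; rewrite /jumps /=; case: e; split; lra.
have [T [T_uniq T0 T01 T_jump]] :=
  jump_thresholds (fun a => (jumps_bounds a).1) (fun a => (jumps_bounds a).2).
apply: (conv_seq (s := T) (w := step_weight T) (p := round_mx)).
- by move=> t /T01 t01; apply: round_mx_Pi_box.
- by move=> t tT; apply: step_weight_ge0.
- exact: sum_step_weight.
rewrite sum_round_mx // => xi v.
  by have := T_jump (xi, v, false); rewrite /jumps /= addr0.
exact: (T_jump (xi, v, true)).
Qed.

End Main.

Theorem corollary1 (R : realFieldType) (N n : nat) (C : rat)
    (d : 'I_N -> 'I_n -> rat)
    (HC : 0 < C)
    (Hd0 : forall xi v, 0 <= d xi v)
    (HdC : forall xi v, d xi v <= C)
    (r : seq 'I_n) (Hr : is_route r) (b : 'I_n -> nat) :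
  forall y : 'M[R]_(N, n),
    conv (fun z => Pi (ratr C) (fun xi v => ratr (d xi v)) r z /\ box b z) y
    <-> conv (Pi (ratr C) (fun xi v => ratr (d xi v)) r) y /\ box b y.
Proof.
have C_gt0 : 0 < ratr C :> R by rewrite ltr0q.
have d_ge0 xi v : 0 <= ratr (d xi v) :> R by rewrite ler0q.
move=> y; split=> [y_conv|[y_conv y_box]].
  split; first by apply: conv_mono y_conv => z [].
  by apply: box_conv y_conv => z [].
have [r_uniq r_gt0] := Hr; have x0 : 'I_n by move: r_gt0; case: (r) => // v.
exact: conv_Pi_box.
Qed.
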